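(* Consider the discrete-time system with sensor and actuator attacks described in the context. Let $q_1,q_2$ be the largest integers such that for every $J_u\subset\{1,\dots,n_u\}$ with $\card(J_u)\le 2q_1<n_u$ and every $J_s\subset\{1,\dots,n_y\}$ with $\card(J_s)\ge n_y-2q_2>0$ a partial UIO for the pair $(J_u,J_s)$ exists, and suppose $\card(W_u)\le q_1<\frac{n_u}{2}$ and $\card(W_y)\le q_2<\frac{n_y}{2}$. Run a partial UIO $\hat x_{J_{us}}$ for each pair $(J_u,J_s)$ with $\card(J_u)=q_1$, $\card(J_s)=n_y-q_2$, and a partial UIO $\hat x_{S_{us}}$ for each pair $(S_u,S_s)$ with $\card(S_u)=2q_1$, $\card(S_s)=n_y-2q_2$. For $k\ge0$ and each such $(J_u,J_s)$ define $$\pi_{J_{us}}(k)=\max_{S_u\supset J_u,\ \card(S_u)=2q_1;\ S_s\subset J_s,\ \card(S_s)=n_y-2q_2}|\hat x_{J_{us}}(k)-\hat x_{S_{us}}(k)|,$$ let $(\sigma_u(k),\sigma_s(k))$ be a minimizer of $\pi_{J_{us}}(k)$ over all pairs $(J_u,J_s)$ with $\card(J_u)=q_1$, $\card(J_s)=n_y-q_2$, and set $\hat x(k)=\hat x_{\sigma_{us}(k)}(k)$, the estimate of the partial UIO indexed by $(\sigma_u(k),\sigma_s(k))$. Define $e(k)=\hat x_{\sigma_{us}(k)}(k)-x(k)$. Then there exists a class-$\mathcal{KL}$ function $\bar\beta$ such that $$|e(k)|\le\bar\beta(e_0,k)\quad\text{for all }k\ge0,\qquad e_0:=\max_{(J_u,J_s),(S_u,S_s)}\{|e_{J_{us}}(0)|,|e_{S_{us}}(0)|\},$$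 the maximum being over all pairs of the two kinds above, with $e_{J_{us}}=\hat x_{J_{us}}-x$, $e_{S_{us}}=\hat x_{S_{us}}-x$.
   Context: System: $x(k+1)=f(x(k))+B(u(k)+a_u(k))$, $y(k)=h(x(k))+a_y(k)$, $k\in\mathbb{N}$, with state $x\in\mathbb{R}^n$, known input $u\in\mathbb{R}^{n_u}$, actuator attack $a_u=(a_{u1},\dots,a_{un_u})^\top$, output $y\in\mathbb{R}^{n_y}$, sensor attack $a_y=(a_{y1},\dots,a_{yn_y})^\top$ (attacks may be arbitrarily large), $f:\mathbb{R}^n\to\mathbb{R}^n$, $h:\mathbb{R}^n\to\mathbb{R}^{n_y}$, $B=[b_1,\dots,b_{n_u}]\in\mathbb{R}^{n\times n_u}$ of full column rank. Attacked sets: $W_u=\{i:a_{ui}(k)\ne0\text{ for some }k\ge0\}$, $W_y=\{i:a_{yi}(k)\ne0\text{ for some }k\ge0\}$ (unknown, time-invariant), so $\supp(a_u(k))\subseteq W_u$, $\supp(a_y(k))\subseteq W_y$ for all $k$. For index sets $J$, $y^J,a_y^J,a_u^J$ denote subvectors indexed by $J$ and $b_J$ the matrix with columns $b_i$, $i\in J$. A partial UIO for the pair $(J_u,J_s)$ (an unknown input observer for $x(k+1)=f(x)+Bu+b_{J_u}a_u^{J_u}$, $y^{J_s}=h^{J_s}(x)+a_y^{J_s}$ with unknown input $a_u^{J_u}$) is a system $\hat x_{J_{us}}(k+1)=f_{J_{us}}(\hat x_{J_{us}}(k),u(k),y^{J_s}(k),y^{J_s}(k+1))$, $f_{J_{us}}:\mathbb{R}^n\times\mathbb{R}^{n_u}\times\mathbb{R}^{\card(J_s)}\times\mathbb{R}^{\card(J_s)}\to\mathbb{R}^n$,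 such that, with $e_{J_{us}}=\hat x_{J_{us}}-x$, there is a class-$\mathcal{KL}$ function $\beta_{J_{us}}$ with $|e_{J_{us}}(k)|\le\beta_{J_{us}}(|e_{J_{us}}(0)|,k)$ for all $k\ge0$, for all initial conditions $x(0),\hat x_{J_{us}}(0)$ and known inputs, whenever $W_u\subseteq J_u$ and $a_y^{J_s}(k)=0$ for all $k\ge0$. $|\cdot|$ is the Euclidean norm. *)

From HB Require Import structures.
From mathcomp Require Import all_boot all_order all_algebra.
From mathcomp Require Import all_classical all_reals all_analysis.
Set Implicit Arguments. Unset Strict Implicit. Unset Printing Implicit Defensive.
Import Order.TTheory GRing.Theory Num.Theory.
Import numFieldNormedType.Exports.
Local Open Scope classical_set_scope.
Local Open Scope ring_scope.

Section Defs.
Variable R : realType.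

Definition enorm (m : nat) (v : 'cV[R]_m) : R :=
  Num.sqrt (\sum_(i < m) v i 0 ^+ 2).

Definition classK (a : R -> R) : Prop :=
  [/\ {within `[0, +oo[%classic, continuous a},
      a 0 = 0 &
      forall r s : R, 0 <= r -> r < s -> a r < a s].

Definition classKL (b : R -> nat -> R) : Prop :=
  [/\ forall k : nat, classK (fun r => b r k),
      forall (r : R) (k : nat), 0 <= r -> b r k.+1 <= b r k &
      forall r : R, 0 <= r -> b r @ \oo --> (0 : R)].

(* sub-vector indexed by the set J (in increasing index order) *)
Definition subv (m : nat) (J : {set 'I_m}) (v : 'cV[R]_m) : 'cV[R]_#|J| :=
  \col_(i < #|J|) v (enum_val i) 0.

Definition attacked (m : nat) (a : nat -> 'cV[R]_m) : {set 'I_m} :=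
  [set i | `[< exists k : nat, a k i 0 != 0 >]].

Definition is_traj (n nu : nat) (f : 'cV[R]_n -> 'cV[R]_n) (B : 'M[R]_(n, nu))
  (x : nat -> 'cV[R]_n) (u au : nat -> 'cV[R]_nu) : Prop :=
  forall k, x k.+1 = f (x k) + B *m (u k + au k).

Definition outp (n ny : nat) (h : 'cV[R]_n -> 'cV[R]_ny)
  (x : nat -> 'cV[R]_n) (ay : nat -> 'cV[R]_ny) (k : nat) : 'cV[R]_ny :=
  h (x k) + ay k.

Definition obs_map (n nu ny : nat) (Js : {set 'I_ny}) :=
  'cV[R]_n -> 'cV[R]_nu -> 'cV[R]_#|Js| -> 'cV[R]_#|Js| -> 'cV[R]_n.

Definition obs_run (n nu ny : nat) (Js : {set 'I_ny}) (fJ : obs_map n nu Js)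
  (xh : nat -> 'cV[R]_n) (u : nat -> 'cV[R]_nu) (y : nat -> 'cV[R]_ny) : Prop :=
  forall k, xh k.+1 = fJ (xh k) (u k) (subv Js (y k)) (subv Js (y k.+1)).

Definition partial_UIO (n nu ny : nat) (f : 'cV[R]_n -> 'cV[R]_n)
  (h : 'cV[R]_n -> 'cV[R]_ny) (B : 'M[R]_(n, nu))
  (Ju : {set 'I_nu}) (Js : {set 'I_ny}) (fJ : obs_map n nu Js) : Prop :=
  exists beta : R -> nat -> R, classKL beta /\
    forall (x xh : nat -> 'cV[R]_n) (u au : nat -> 'cV[R]_nu)
           (ay : nat -> 'cV[R]_ny),
      is_traj f B x u au ->
      attacked au \subset Ju ->
      (forall k (i : 'I_ny), i \in Js -> ay k i 0 = 0) ->
      obs_run fJ xh u (outp h x ay) ->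
      forall k, enorm (xh k - x k) <= beta (enorm (xh 0 - x 0)) k.

Definition UIO_exist (n nu ny : nat) (f : 'cV[R]_n -> 'cV[R]_n)
  (h : 'cV[R]_n -> 'cV[R]_ny) (B : 'M[R]_(n, nu)) (q1 q2 : nat) : Prop :=
  [/\ (2 * q1 < nu)%N, (0 < ny - 2 * q2)%N &
      forall (Ju : {set 'I_nu}) (Js : {set 'I_ny}),
        (#|Ju| <= 2 * q1)%N -> (ny - 2 * q2 <= #|Js|)%N ->
        exists fJ : obs_map n nu Js, partial_UIO f h B Ju fJ].

Definition pi_fun (n nu ny q1 q2 : nat)
  (xhJ xhS : {set 'I_nu} -> {set 'I_ny} -> nat -> 'cV[R]_n)
  (Ju : {set 'I_nu}) (Js : {set 'I_ny}) (k : nat) : R :=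
  \big[Num.max/0]_(Su : {set 'I_nu} | (Ju \subset Su) && (#|Su| == 2 * q1)%N)
   \big[Num.max/0]_(Ss : {set 'I_ny} | (Ss \subset Js) && (#|Ss| == ny - 2 * q2)%N)
     enorm (xhJ Ju Js k - xhS Su Ss k).

Definition e0_val (n nu ny q1 q2 : nat)
  (xhJ xhS : {set 'I_nu} -> {set 'I_ny} -> nat -> 'cV[R]_n)
  (x : nat -> 'cV[R]_n) : R :=
  Num.max
   (\big[Num.max/0]_(Ju : {set 'I_nu} | #|Ju| == (q1)%N)
     \big[Num.max/0]_(Js : {set 'I_ny} | #|Js| == (ny - q2)%N)
       enorm (xhJ Ju Js 0 - x 0))
   (\big[Num.max/0]_(Su : {set 'I_nu} | #|Su| == (2 * q1)%N)
     \big[Num.max/0]_(Ss : {set 'I_ny} | #|Ss| == (ny - 2 * q2)%N)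
       enorm (xhS Su Ss 0 - x 0)).

End Defs.

From HB Require Import structures.
From mathcomp Require Import all_boot all_order all_algebra.
From mathcomp Require Import all_classical all_reals all_analysis.
From mathcomp Require Import lra zify ring.
Import Order.TTheory GRing.Theory Num.Theory.
Import numFieldNormedType.Exports.
Local Open Scope ring_scope.

(* Let W_u and W_y be the attacked channels. Some pair (J_u, J_s) of the first
   family is clean (W_u in J_u, J_s disjoint from W_y), and so is every pair of
   the second family refining it; these observers all converge, hence pi at
   that clean pair is small, and so is pi at the minimiser sigma. Conversely
   sigma itself is refined by a clean pair (S_u, S_s) of the second family:
   S_u containing sigma_u and W_u has room for 2 q1 elements, S_s inside
   sigma_s minus W_y for n_y - 2 q2. By the triangle inequality the error of
   sigma is at most pi(sigma) plus the error of a converging observer. One KL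
   function dominating the finitely many observer gains of each family then
   yields betabar = beta_J + 2 beta_S. *)

Lemma cauchy_schwarz (R : realDomainType) (I : finType) (F G : I -> R) :
  (\sum_i F i * G i) ^+ 2 <= (\sum_i F i ^+ 2) * (\sum_i G i ^+ 2).
Proof.
set A := \sum_i F i ^+ 2; set C := \sum_i F i * G i.
have AB : A * (\sum_i G i ^+ 2) = \sum_i \sum_j F i ^+ 2 * G j ^+ 2.
  exact: big_distrlr.
have BA : A * (\sum_i G i ^+ 2) = \sum_i \sum_j F j ^+ 2 * G i ^+ 2.
  by rewrite AB exchange_big.
have CC : C ^+ 2 = \sum_i \sum_j F i * G i * (F j * G j).
  by rewrite expr2 big_distrlr.
have lagrange : \sum_i \sum_j (F i * G j - F j * G i) ^+ 2 =
    2 * (A * (\sum_i G i ^+ 2) - C ^+ 2).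
  rewrite mulrBr mulr2n mulrDl mul1r {1}AB BA CC -big_split /= mulr_sumr -sumrB.
  apply: eq_bigr => i _; rewrite -big_split /= mulr_sumr -sumrB.
  by apply: eq_bigr => j _; ring.
have : 0 <= \sum_i \sum_j (F i * G j - F j * G i) ^+ 2.
  by apply: sumr_ge0 => i _; apply: sumr_ge0 => j _; exact: sqr_ge0.
by rewrite lagrange pmulr_rge0 // subr_ge0.
Qed.

Section EuclideanNorm.
Context {R : realType} {m : nat}.
Implicit Types a b c : 'cV[R]_m.

Lemma enorm_ge0 a : 0 <= enorm a.
Proof. exact: sqrtr_ge0. Qed.

Lemma enormD a b : enorm (a + b) <= enorm a + enorm b.
Proof.
rewrite /enorm; set A := \sum_i a i 0 ^+ 2; set B := \sum_i b i 0 ^+ 2.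
have A0 : 0 <= A by apply: sumr_ge0 => i _; exact: sqr_ge0.
have B0 : 0 <= B by apply: sumr_ge0 => i _; exact: sqr_ge0.
have C_le : \sum_i a i 0 * b i 0 <= Num.sqrt A * Num.sqrt B.
  rewrite -sqrtrM // (le_trans (ler_norm _)) // -sqrtr_sqr ler_sqrt ?mulr_ge0 //.
  exact: cauchy_schwarz.
have -> : \sum_i (a + b) i 0 ^+ 2 = A + 2 * \sum_i a i 0 * b i 0 + B.
  rewrite mulr_sumr -!big_split /=; apply: eq_bigr => i _; rewrite mxE; ring.
rewrite -[leRHS]ger0_norm ?addr_ge0 ?sqrtr_ge0 // -sqrtr_sqr ler_sqrt ?sqr_ge0 //.
rewrite sqrrD !sqr_sqrtr //; move: C_le; set C := \sum_i _; set sA := Num.sqrt A.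
set sB := Num.sqrt B; rewrite -mulr_natl; lra.
Qed.

Lemma enorm_distC a b : enorm (a - b) = enorm (b - a).
Proof.
by rewrite /enorm; congr Num.sqrt; apply: eq_bigr => i _; rewrite !mxE -sqrrN opprB.
Qed.

Lemma enorm_distD a b c : enorm (a - b) <= enorm (a - c) + enorm (c - b).
Proof.
have -> : a - b = (a - c) + (c - b) by rewrite addrA subrK.
exact: enormD.
Qed.

End EuclideanNorm.

Lemma exists_subset_card (T : finType) (A : {set T}) m :
  (m <= #|A|)%N -> exists2 B : {set T}, B \subset A & #|B| = m.
Proof.
move/card_geqP => [s [us ss sA]]; exists [set x in s].
  by apply/fintype.subsetP => x; rewrite inE => /sA.
by rewrite cardsE (card_uniqP us).
Qed.

Lemma exists_superset_card (T : finType) (A : {set T}) m :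
  (#|A| <= m <= #|T|)%N -> exists2 B : {set T}, A \subset B & #|B| = m.
Proof.
move=> /andP [Am mT].
have [C CA cardC] : exists2 C : {set T}, C \subset ~: A & #|C| = (#|T| - m)%N.
  by apply: exists_subset_card; have := cardsC A; lia.
by exists (~: C); [rewrite finset.subsetC | have := cardsC C; lia].
Qed.

Section ClassKL.
Context {R : realType}.
Implicit Types (b : R -> nat -> R) (r s : R).

Lemma classKL_exists : exists b, classKL b.
Proof.
exists (fun r k => r * harmonic k); split.
- move=> k; split.
  + exact/continuous_subspaceT/mulrr_continuous.
  + by rewrite mul0r.
  + by move=> r s _ rs; rewrite ltr_pM2r // harmonic_gt0.
- move=> r k r0; rewrite ler_wpM2l // /harmonic /= lef_pV2 ?posrE // ler_nat; lia.
- by move=> r _; rewrite -(mulr0 r); apply: cvgMr; exact: cvg_harmonic.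
Qed.

Lemma classKL_le [b r s] k : classKL b -> 0 <= r -> r <= s -> b r k <= b s k.
Proof.
move=> [Kb _ _] r0; rewrite le_eqVlt => /predU1P [-> //|rs].
by have [_ _ incr] := Kb k; exact/ltW/incr.
Qed.

Lemma classKL_ge0 [b r] k : classKL b -> 0 <= r -> 0 <= b r k.
Proof.
move=> KLb r0; have [Kb _ _] := KLb; have [_ b0 _] := Kb k.
by rewrite -b0 classKL_le.
Qed.

Lemma classKL_add b1 b2 :
  classKL b1 -> classKL b2 -> classKL (fun r k => b1 r k + b2 r k).
Proof.
move=> [K1 dec1 lim1] [K2 dec2 lim2]; split.
- move=> k; have [c1 z1 i1] := K1 k; have [c2 z2 i2] := K2 k; split.
  + by move=> r; apply: continuousD; [exact: c1 | exact: c2].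
  + by rewrite z1 z2 addr0.
  + by move=> r s r0 rs; apply: ltrD; [exact: i1 | exact: i2].
- by move=> r k r0; apply: lerD; [exact: dec1 | exact: dec2].
- by move=> r r0; rewrite -[0]addr0; apply: cvgD; [exact: lim1 | exact: lim2].
Qed.

Lemma classKL_addsum (I : Type) (s : seq I) (P : pred I) b (F : I -> R -> nat -> R) :
  classKL b -> (forall i, classKL (F i)) ->
  classKL (fun r k => b r k + \sum_(i <- s | P i) F i r k).
Proof.
move=> KLb KLF; elim: s => [|i s IH].
  by under eq_fun do under eq_fun do rewrite big_nil addr0.
set S := fun r k => \sum_(j <- s | P j) F j r k.
have -> : (fun r k => b r k + \sum_(j <- i :: s | P j) F j r k) =
    if P i then fun r k => F i r k + (b r k + S r k) else fun r k => b r k + S r k.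
  apply/funext => r; apply/funext => k.
  by rewrite big_cons /S; case: (P i) => //; rewrite addrCA.
case: (P i) => //.
exact: classKL_add.
Qed.

Lemma classKL_common_bound (T : finType) (P : T -> Prop)
    (Q : T -> (R -> nat -> R) -> Prop) :
  (forall t b b', (forall r k, 0 <= r -> b r k <= b' r k) -> Q t b -> Q t b') ->
  (forall t, P t -> exists2 b, classKL b & Q t b) ->
  exists2 beta, classKL beta & forall t, P t -> Q t beta.
Proof.
move=> Qup HQ; have [b0 KLb0] := classKL_exists.
have /choice [F HF] : forall t, exists b, classKL b /\ (P t -> Q t b).
  move=> t; case: (pselect (P t)) => [/HQ [b KLb Qb] | nPt]; first by exists b.
  by exists b0; split => // /nPt.
have KLF t : classKL (F t) by case: (HF t).
exists (fun r k => b0 r k + \sum_t F t r k); first exact: classKL_addsum.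
move=> t Pt; apply: Qup (proj2 (HF t) Pt) => r k r0.
rewrite (bigD1 t) //= addrCA lerDl addr_ge0 ?classKL_ge0 ?sumr_ge0 // => t' _.
exact: classKL_ge0.
Qed.

End ClassKL.

Lemma attacked_free (R : realType) m (a : nat -> 'cV[R]_m) i k :
  i \notin attacked a -> a k i 0 = 0.
Proof.
by rewrite inE => /asboolPn nA; apply/eqP; apply: contra_notT nA => ?; exists k.
Qed.

Section PartialUIO.
Context {R : realType} {n nu ny : nat}.
Context {f : 'cV[R]_n -> 'cV[R]_n} {h : 'cV[R]_n -> 'cV[R]_ny} {B : 'M[R]_(n, nu)}.

(* [partial_UIO f h B Ju fJ] unfolds to [exists beta, classKL beta /\ UIO_bound Ju fJ beta]. *)
Definition UIO_bound (Ju : {set 'I_nu}) {Js : {set 'I_ny}} (fJ : obs_map R n nu Js)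
    (beta : R -> nat -> R) : Prop :=
  forall (x xh : nat -> 'cV[R]_n) (u au : nat -> 'cV[R]_nu) (ay : nat -> 'cV[R]_ny),
    is_traj f B x u au ->
    attacked au \subset Ju ->
    (forall k (i : 'I_ny), i \in Js -> ay k i 0 = 0) ->
    obs_run fJ xh u (outp h x ay) ->
    forall k, enorm (xh k - x k) <= beta (enorm (xh 0 - x 0)) k.

Lemma UIO_boundW Ju Js (fJ : obs_map R n nu Js) beta beta' :
  (forall r k, 0 <= r -> beta r k <= beta' r k) ->
  UIO_bound Ju fJ beta -> UIO_bound Ju fJ beta'.
Proof.
move=> le_beta bound x xh u au ay traj hau hay run k.
exact: le_trans (bound _ _ _ _ _ traj hau hay run k) (le_beta _ _ (enorm_ge0 _)).
Qed.

Lemma partial_UIO_common_bound (P : {set 'I_nu} -> {set 'I_ny} -> Prop)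
    (obs : forall Ju Js, obs_map R n nu Js) :
  (forall Ju Js, P Ju Js -> partial_UIO f h B Ju (obs Ju Js)) ->
  exists2 beta, classKL beta & forall Ju Js, P Ju Js -> UIO_bound Ju (obs Ju Js) beta.
Proof.
move=> hP.
have [|beta KLbeta hbeta] := @classKL_common_bound R ({set 'I_nu} * {set 'I_ny})%type
  (fun p => P p.1 p.2) (fun p => UIO_bound p.1 (obs p.1 p.2)) (fun p => @UIO_boundW _ _ _).
  by move=> [Ju Js] /= /hP [beta [KLbeta bound]]; exists beta.
by exists beta => // Ju Js; exact: (hbeta (Ju, Js)).
Qed.

Lemma UIO_bound_le [Ju Js] [fJ : obs_map R n nu Js] [beta x xh u au ay E k] :
  classKL beta -> UIO_bound Ju fJ beta ->
  is_traj f B x u au -> attacked au \subset Ju -> Js \subset ~: attacked ay ->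
  obs_run fJ xh u (outp h x ay) -> enorm (xh 0 - x 0) <= E ->
  enorm (xh k - x k) <= beta E k.
Proof.
move=> KLbeta bound traj hau hay run hE.
have clean k' i : i \in Js -> ay k' i 0 = 0.
  by move/(fintype.subsetP hay); rewrite inE; exact: attacked_free.
apply: le_trans (bound _ _ _ _ _ traj hau clean run k) _.
exact: classKL_le k KLbeta (enorm_ge0 _) hE.
Qed.

End PartialUIO.

Section Selection.
Context {R : realType} {n nu ny q1 q2 : nat}.
Context {xhJ xhS : {set 'I_nu} -> {set 'I_ny} -> nat -> 'cV[R]_n} {k : nat}.

Implicit Types (Ju Su su : {set 'I_nu}) (Js Ss ss : {set 'I_ny}).

Local Notation pi := (pi_fun q1 q2 xhJ xhS).

Lemma pi_fun_ge Ju Js Su Ss :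
  Ju \subset Su -> #|Su| = (2 * q1)%N -> Ss \subset Js -> #|Ss| = (ny - 2 * q2)%N ->
  enorm (xhJ Ju Js k - xhS Su Ss k) <= pi Ju Js k.
Proof.
move=> JSu cSu SsJ cSs; apply: (bigmax_sup Su); first by rewrite JSu cSu eqxx.
by apply: (bigmax_sup Ss); first by rewrite SsJ cSs eqxx.
Qed.

Lemma pi_fun_le Ju Js c : 0 <= c ->
  (forall Su Ss, Ju \subset Su -> #|Su| = (2 * q1)%N -> Ss \subset Js ->
     #|Ss| = (ny - 2 * q2)%N -> enorm (xhJ Ju Js k - xhS Su Ss k) <= c) ->
  pi Ju Js k <= c.
Proof.
move=> c0 hc; rewrite /pi_fun; apply: bigmax_le => // Su /andP [JSu /eqP cSu].
by apply: bigmax_le => // Ss /andP [SsJ /eqP cSs]; exact: hc.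
Qed.

Context {z : 'cV[R]_n} {Wu : {set 'I_nu}} {Wy : {set 'I_ny}} {cJ cS : R}.
Hypotheses (cardWu : (#|Wu| <= q1)%N) (cardWy : (#|Wy| <= q2)%N) (q1_le : (2 * q1 <= nu)%N).
Hypothesis errJ : forall Ju Js, #|Ju| = q1 -> #|Js| = (ny - q2)%N ->
  Wu \subset Ju -> Js \subset ~: Wy -> enorm (xhJ Ju Js k - z) <= cJ.
Hypothesis errS : forall Su Ss, #|Su| = (2 * q1)%N -> #|Ss| = (ny - 2 * q2)%N ->
  Wu \subset Su -> Ss \subset ~: Wy -> enorm (xhS Su Ss k - z) <= cS.

Lemma exists_clean_pair : exists Ju Js,
  [/\ #|Ju| = q1, #|Js| = (ny - q2)%N, Wu \subset Ju & Js \subset ~: Wy].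
Proof.
have [Ju WuJ cJu] : exists2 Ju : {set 'I_nu}, Wu \subset Ju & #|Ju| = q1.
  by apply: exists_superset_card; rewrite card_ord; lia.
have [Js JsW cJs] : exists2 Js : {set 'I_ny}, Js \subset ~: Wy & #|Js| = (ny - q2)%N.
  by apply: exists_subset_card; have := cardsC Wy; rewrite card_ord; lia.
by exists Ju, Js.
Qed.

Lemma exists_clean_refinement [su ss] : #|su| = q1 -> #|ss| = (ny - q2)%N ->
  exists Su Ss, [/\ su :|: Wu \subset Su, #|Su| = (2 * q1)%N,
                   Ss \subset ss :\: Wy & #|Ss| = (ny - 2 * q2)%N].
Proof.
move=> csu css.
have [Su suS cSu] : exists2 Su : {set 'I_nu}, su :|: Wu \subset Su & #|Su| = (2 * q1)%N.
  by apply: exists_superset_card; rewrite card_ord; have := cardsU su Wu; lia.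
have [Ss Sss cSs] : exists2 Ss : {set 'I_ny}, Ss \subset ss :\: Wy & #|Ss| = (ny - 2 * q2)%N.
  apply: exists_subset_card; rewrite cardsD.
  by have := subset_leq_card (finset.subsetIr ss Wy); lia.
by exists Su, Ss.
Qed.

Lemma error_le_pi_fun [su ss] : #|su| = q1 -> #|ss| = (ny - q2)%N ->
  enorm (xhJ su ss k - z) <= pi su ss k + cS.
Proof.
move=> csu css; have [Su [Ss [+ cSu + cSs]]] := exists_clean_refinement csu css.
rewrite finset.subUset finset.setDE finset.subsetI => /andP [suS WuS] /andP [Sss SsW].
apply: le_trans (enorm_distD _ _ (xhS Su Ss k)) _.
by apply: lerD; [exact: pi_fun_ge | exact: errS].
Qed.

Lemma pi_fun_clean_le [Ju Js] : #|Ju| = q1 -> #|Js| = (ny - q2)%N ->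
  Wu \subset Ju -> Js \subset ~: Wy -> pi Ju Js k <= cJ + cS.
Proof.
move=> cJu cJs WuJ JsW.
have cS0 : 0 <= cS.
  have [Su [Ss [+ cSu + cSs]]] := exists_clean_refinement cJu cJs.
  rewrite finset.subUset finset.setDE finset.subsetI => /andP [_ WuS] /andP [_ SsW].
  exact: le_trans (enorm_ge0 _) (errS _ _ cSu cSs WuS SsW).
have cJ0 : 0 <= cJ := le_trans (enorm_ge0 _) (errJ _ _ cJu cJs WuJ JsW).
apply: pi_fun_le => [|Su Ss JSu cSu SsJ cSs]; first exact: addr_ge0.
apply: le_trans (enorm_distD _ _ z) _; apply: lerD; first exact: errJ.
rewrite enorm_distC; apply: errS => //.
  exact: fintype.subset_trans WuJ JSu.
exact: fintype.subset_trans SsJ JsW.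
Qed.

Lemma argmin_pi_fun_error [su ss] : #|su| = q1 -> #|ss| = (ny - q2)%N ->
  (forall Ju Js, #|Ju| = q1 -> #|Js| = (ny - q2)%N -> pi su ss k <= pi Ju Js k) ->
  enorm (xhJ su ss k - z) <= cJ + cS + cS.
Proof.
move=> csu css min_pi; have [Ju [Js [cJu cJs WuJ JsW]]] := exists_clean_pair.
apply: le_trans (error_le_pi_fun csu css) _; rewrite lerD2r.
exact: le_trans (min_pi _ _ cJu cJs) (pi_fun_clean_le cJu cJs WuJ JsW).
Qed.

End Selection.

Section InitialError.
Context {R : realType} {n nu ny q1 q2 : nat}.
Context {xhJ xhS : {set 'I_nu} -> {set 'I_ny} -> nat -> 'cV[R]_n} {x : nat -> 'cV[R]_n}.
Implicit Types (Ju : {set 'I_nu}) (Js : {set 'I_ny}).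

Lemma e0_val_geJ [Ju Js] : #|Ju| = q1 -> #|Js| = (ny - q2)%N ->
  enorm (xhJ Ju Js 0 - x 0) <= e0_val q1 q2 xhJ xhS x.
Proof.
move=> cJu cJs; rewrite le_max; apply/orP; left.
by apply: (bigmax_sup Ju); rewrite ?cJu //; apply: (bigmax_sup Js); rewrite ?cJs.
Qed.

Lemma e0_val_geS [Ju Js] : #|Ju| = (2 * q1)%N -> #|Js| = (ny - 2 * q2)%N ->
  enorm (xhS Ju Js 0 - x 0) <= e0_val q1 q2 xhJ xhS x.
Proof.
move=> cJu cJs; rewrite le_max; apply/orP; right.
by apply: (bigmax_sup Ju); rewrite ?cJu //; apply: (bigmax_sup Js); rewrite ?cJs.
Qed.

End InitialError.

Theorem theorem2 (R : realType) (n nu ny : nat)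
  (f : 'cV[R]_n -> 'cV[R]_n) (h : 'cV[R]_n -> 'cV[R]_ny) (B : 'M[R]_(n, nu))
  (hB : \rank B = nu)
  (q1 q2 : nat)
  (hq : UIO_exist f h B q1 q2)
  (hqmax : forall q1' q2' : nat, UIO_exist f h B q1' q2' ->
             (q1' <= q1)%N /\ (q2' <= q2)%N)
  (obsJ obsS : forall (Ju : {set 'I_nu}) (Js : {set 'I_ny}), obs_map R n nu Js)
  (hobsJ : forall (Ju : {set 'I_nu}) (Js : {set 'I_ny}), #|Ju| = q1 -> #|Js| = (ny - q2)%N ->
             partial_UIO f h B Ju (obsJ Ju Js))
  (hobsS : forall (Su : {set 'I_nu}) (Ss : {set 'I_ny}), #|Su| = (2 * q1)%N -> #|Ss| = (ny - 2 * q2)%N ->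
             partial_UIO f h B Su (obsS Su Ss)) :
  exists betabar : R -> nat -> R, classKL betabar /\
    forall (x : nat -> 'cV[R]_n) (u au : nat -> 'cV[R]_nu)
           (ay : nat -> 'cV[R]_ny)
           (xhJ xhS : {set 'I_nu} -> {set 'I_ny} -> nat -> 'cV[R]_n)
           (sigma : nat -> {set 'I_nu} * {set 'I_ny}),
      is_traj f B x u au ->
      (#|attacked au| <= q1)%N -> (2 * q1 < nu)%N ->
      (#|attacked ay| <= q2)%N -> (2 * q2 < ny)%N ->
      (forall (Ju : {set 'I_nu}) (Js : {set 'I_ny}), #|Ju| = q1 -> #|Js| = (ny - q2)%N ->
         obs_run (obsJ Ju Js) (xhJ Ju Js) u (outp h x ay)) ->
      (forall (Su : {set 'I_nu}) (Ss : {set 'I_ny}), #|Su| = (2 * q1)%N -> #|Ss| = (ny - 2 * q2)%N ->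
         obs_run (obsS Su Ss) (xhS Su Ss) u (outp h x ay)) ->
      (forall k, #|(sigma k).1| = q1 /\ #|(sigma k).2| = (ny - q2)%N /\
         forall (Ju : {set 'I_nu}) (Js : {set 'I_ny}), #|Ju| = q1 -> #|Js| = (ny - q2)%N ->
           pi_fun q1 q2 xhJ xhS (sigma k).1 (sigma k).2 k
             <= pi_fun q1 q2 xhJ xhS Ju Js k) ->
      forall k : nat,
        enorm (xhJ (sigma k).1 (sigma k).2 k - x k)
          <= betabar (e0_val q1 q2 xhJ xhS x) k.
Proof.
have [betaJ KLJ boundJ] := partial_UIO_common_bound
  (fun Ju Js => #|Ju| = q1 /\ #|Js| = (ny - q2)%N) obsJ
  (fun Ju Js '(conj cJu cJs) => hobsJ Ju Js cJu cJs).
have [betaS KLS boundS] := partial_UIO_common_bound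
  (fun Su Ss => #|Su| = (2 * q1)%N /\ #|Ss| = (ny - 2 * q2)%N) obsS
  (fun Su Ss '(conj cSu cSs) => hobsS Su Ss cSu cSs).
exists (fun r k => betaJ r k + betaS r k + betaS r k); split.
  by apply: classKL_add => //; apply: classKL_add.
move=> x u au ay xhJ xhS sigma traj cardWu q1_lt cardWy _ runJ runS sigma_min k.
have [csu [css min_pi]] := sigma_min k.
set E := e0_val q1 q2 xhJ xhS x.
apply: (argmin_pi_fun_error (xhS := xhS) (cJ := betaJ E k) (cS := betaS E k)
          cardWu cardWy (ltnW q1_lt)) => // [Ju Js cJu cJs WuJ JsW | Su Ss cSu cSs WuS SsW].
- exact: UIO_bound_le KLJ (boundJ _ _ (conj cJu cJs)) traj WuJ JsW (runJ _ _ cJu cJs)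
    (e0_val_geJ cJu cJs).
- exact: UIO_bound_le KLS (boundS _ _ (conj cSu cSs)) traj WuS SsW (runS _ _ cSu cSs)
    (e0_val_geS cSu cSs).
Qed.
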